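(* Let $\epsilon_0>0$ and let $\beta_*:[-8\epsilon_0,8\epsilon_0]\to\mathbb{R}$ be smooth with $\beta_*(t)=t$ for $t\in[-8\epsilon_0,-4\epsilon_0]\cup[4\epsilon_0,8\epsilon_0]$, $\beta_*(t)=0$ for $t\in[-2\epsilon_0,2\epsilon_0]$, $\beta_*'(t)>0$ for $t\in[-4\epsilon_0,-2\epsilon_0)\cup(2\epsilon_0,4\epsilon_0]$, $\beta_*''<0$ on $(-4\epsilon_0,-2\epsilon_0)$ and $\beta_*''>0$ on $(2\epsilon_0,4\epsilon_0)$. For $L>0$ define $\beta_L:[-L-8\epsilon_0,L+8\epsilon_0]\to\mathbb{R}$ by $\beta_L(t)=\beta_*(t+L)$ on $[-L-8\epsilon_0,-L]$, $\beta_L(t)=0$ on $[-L,L]$, $\beta_L(t)=\beta_*(t-L)$ on $[L,L+8\epsilon_0]$. Let $\kappa_*\ge1$. Then there is a constant $L(\epsilon_0,\kappa_*,\beta_* )\ge1$ depending only on $\epsilon_0$, $\kappa_*$ and $\beta_*$ such that for every $L\ge L(\epsilon_0,\kappa_*,\beta_* )$ there is a smooth function $h_L:[-L-8\epsilon_0,L+8\epsilon_0]\to[-8\epsilon_0,8\epsilon_0]$ with: $h_L'(t)>0$ everywhere; $h_L=\beta_L$ on a neighborhood of $[-L-8\epsilon_0,-L-11\epsilon_0/4]$ and of $[L+11\epsilon_0/4,L+8\epsilon_0]$; $\sup|h_L-\beta_L|\le100\kappa_*^{-1}L^{-1}$; and $h_L'(t)\ge\tfrac12\kappa_*^{-1}L^{-2}$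 for all $t$. *)

From Stdlib Require Import Reals.
From Coquelicot Require Import Coquelicot.
Open Scope R_scope.

(* A function defined on the closed interval [a,b] is smooth if it agrees on
   [a,b] with a function that is infinitely differentiable on an open interval
   (a - d, b + d) containing [a,b]. *)
Definition smooth_open (g : R -> R) (a b d : R) : Prop :=
  forall (n : nat) (x : R), a - d < x < b + d -> ex_derive_n g n x.

Definition smooth_on (a b : R) (f : R -> R) : Prop :=
  exists (g : R -> R) (d : R), 0 < d /\
    (forall x, a <= x <= b -> g x = f x) /\ smooth_open g a b d.

Definition beta_L (bs : R -> R) (L : R) (t : R) : R :=
  if Rle_dec t (- L) then bs (t + L)
  else if Rle_dec t L then 0 else bs (t - L).

From Stdlib Require Import Reals Lra.
From Coquelicot Require Import Coquelicot.
Open Scope R_scope.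

(* Write beta_L(t) = Gl(t + L) + Gr(t - L), where Gr is the right half of beta_*
   (extended by the identity) and Gl the mirror image of the right half of the
   mirrored beta_*.  The interpolant is h = beta_L + c S(t + L + 5 eps0/2) with
   c = 1/(kappa L^2), where the sawtooth S vanishes outside [0, D + w]
   (w = eps0/8, D ~ 2L), drops by about D on [0, 2w] and then climbs back with
   slope exactly 1.  Its steep parts lie where beta_L' >= m > 0 (the slope of
   beta_* on its transition intervals) and cost at most c M D / w <= m/2 once L
   is large; across the flat part of beta_L the slope 1 of S gives h' >= c.  So
   h' >= c/2 everywhere, while |h - beta_L| <= 3 c D = O(1/(kappa L)).  The
   smooth ramps inside S are rescaled copies of Gr, so no bump function has to
   be built. *)

Definition smooth (f : R -> R) : Prop := forall n x, ex_derive_n f n x.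

Definition mirror (f : R -> R) (x : R) : R := - f (- x).

Lemma smooth_const (c : R) : smooth (fun _ => c).
Proof. intros n x. apply ex_derive_n_const. Qed.

Lemma smooth_id : smooth (fun x => x).
Proof.
  intros n x. apply (ex_derive_n_ext (fun y => y ^ 1)); [intros; apply pow_1|].
  apply ex_derive_n_pow.
Qed.

Lemma smooth_plus (f g : R -> R) : smooth f -> smooth g -> smooth (fun x => f x + g x).
Proof. intros Hf Hg n x. apply ex_derive_n_plus; apply filter_forall; auto. Qed.

Lemma smooth_minus (f g : R -> R) : smooth f -> smooth g -> smooth (fun x => f x - g x).
Proof. intros Hf Hg n x. apply ex_derive_n_minus; apply filter_forall; auto. Qed.

Lemma smooth_scal (k : R) (f : R -> R) : smooth f -> smooth (fun x => k * f x).
Proof. intros Hf n x. apply ex_derive_n_scal_l; auto. Qed.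

Lemma smooth_comp_trans (f : R -> R) (q : R) : smooth f -> smooth (fun x => f (x + q)).
Proof. intros Hf n x. apply ex_derive_n_comp_trans; auto. Qed.

Lemma smooth_comp_scal (f : R -> R) (k : R) : smooth f -> smooth (fun x => f (k * x)).
Proof. intros Hf n x. apply ex_derive_n_comp_scal; apply filter_forall; auto. Qed.

Lemma smooth_mirror (f : R -> R) : smooth f -> smooth (mirror f).
Proof.
  intros Hf n x. apply ex_derive_n_opp, ex_derive_n_comp_opp.
  apply filter_forall; auto.
Qed.

Lemma smooth_ex_derive (f : R -> R) (x : R) : smooth f -> ex_derive f x.
Proof. intros Hf. exact (Hf 1%nat x). Qed.

Lemma smooth_continuous_Derive (f : R -> R) (x : R) :
  smooth f -> continuity_pt (Derive f) x.
Proof.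
  intros Hf. apply continuity_pt_filterlim.
  apply (@ex_derive_continuous R_AbsRing R_NormedModule). exact (Hf 2%nat x).
Qed.

Lemma Derive_mirror (f : R -> R) (x : R) :
  ex_derive f (- x) -> Derive (mirror f) x = Derive f (- x).
Proof.
  intros Hf. apply is_derive_unique. unfold mirror.
  auto_derive; [exact Hf | change (fun y => f y) with f; ring].
Qed.

Lemma smooth_nondecreasing (f : R -> R) (x y : R) :
  smooth f -> (forall z, 0 <= Derive f z) -> x <= y -> f x <= f y.
Proof.
  intros Hf Hd.
  set (pr := fun z => ex_derive_Reals_0 f z (smooth_ex_derive f z Hf)).
  apply (nonneg_derivative_1 f pr). intros z. unfold pr. rewrite Derive_Reals. apply Hd.
Qed.

Lemma continuous_left_const (F : R -> R) (x c : R) :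
  continuous F x -> (forall y, y < x -> F y = c) -> F x = c.
Proof.
  intros HF Hc.
  apply (@filterlim_locally_unique _ _ _ (at_left x)
           (Proper_StrongProper _ (at_left_proper_filter x)) F).
  - apply (filterlim_filter_le_1 F (filter_le_within (F := locally x) _)); exact HF.
  - apply (filterlim_within_ext (F := locally x) _ (fun _ => c)); [intros y Hy; symmetry; auto|].
    apply filterlim_const.
Qed.

Lemma Derive_const_on_halfline (f : R -> R) (c r x : R) :
  (forall y, y <= r -> f y = c) -> x < r -> Derive f x = 0.
Proof.
  intros Hf Hx. rewrite (Derive_ext_loc f (fun _ => c)); [apply Derive_const|].
  apply (locally_interval _ x m_infty r); [exact I | exact Hx |].
  intros y _ Hy. apply Hf. simpl in Hy. lra.
Qed.

Lemma Derive_shift_on_halfline (f : R -> R) (q l x : R) :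
  (forall y, l <= y -> f y = y + q) -> l < x -> Derive f x = 1.
Proof.
  intros Hf Hx. rewrite (Derive_ext_loc f (fun y => y + q)).
  - apply is_derive_unique. auto_derive; [exact I | ring].
  - apply (locally_interval _ x l p_infty); [exact Hx | exact I |].
    intros y Hy _. apply Hf. simpl in Hy. lra.
Qed.

Lemma smooth_on_ex_derive_n (a b : R) (f : R -> R) (n : nat) (x : R) :
  smooth_on a b f -> a < x < b -> ex_derive_n f n x.
Proof.
  intros [g [d [Hd [Hgf Hg]]]] Hx. apply (ex_derive_n_ext_loc g).
  - apply (locally_interval _ x a b); [apply Hx | apply Hx |].
    intros y Hy1 Hy2. apply Hgf. simpl in *. lra.
  - apply Hg. lra.
Qed.

Definition right_half (e : R) (b : R -> R) (u : R) : R :=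
  if Rle_dec u 0 then 0 else if Rle_dec u (8 * e) then b u else u.

Set Implicit Arguments.
Record rising_profile (e m : R) (G : R -> R) : Prop := {
  rising_smooth : smooth G;
  rising_zero : forall u, u <= 2 * e -> G u = 0;
  rising_id : forall u, 4 * e <= u -> G u = u;
  rising_Derive_nonneg : forall u, 0 <= Derive G u;
  rising_Derive_ge : forall u, 9 * e / 4 <= u -> m <= Derive G u }.
Unset Implicit Arguments.

Section RightHalf.

Variables (e : R) (b : R -> R).
Hypothesis He : 0 < e.
Hypothesis b_smooth : forall n x, 0 < x < 8 * e -> ex_derive_n b n x.
Hypothesis b_zero : forall u, 0 <= u <= 2 * e -> b u = 0.
Hypothesis b_id : forall u, 4 * e <= u <= 8 * e -> b u = u.
Hypothesis b_Derive_pos : forall u, 2 * e < u <= 4 * e -> 0 < Derive b u.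

Lemma right_half_zero (u : R) : u <= 2 * e -> right_half e b u = 0.
Proof.
  intros Hu. unfold right_half.
  destruct (Rle_dec u 0); [reflexivity|]. destruct (Rle_dec u (8 * e)); [|lra].
  apply b_zero. lra.
Qed.

Lemma right_half_id (u : R) : 4 * e <= u -> right_half e b u = u.
Proof.
  intros Hu. unfold right_half.
  destruct (Rle_dec u 0); [lra|]. destruct (Rle_dec u (8 * e)); [|reflexivity].
  apply b_id. lra.
Qed.

Lemma right_half_inner (u : R) : 0 < u <= 8 * e -> right_half e b u = b u.
Proof.
  intros Hu. unfold right_half.
  destruct (Rle_dec u 0); [lra|]. destruct (Rle_dec u (8 * e)); [reflexivity|lra].
Qed.

Lemma right_half_smooth : smooth (right_half e b).
Proof.
  intros n x.
  destruct (Rlt_le_dec x e) as [Hx|Hx]; [|destruct (Rlt_le_dec x (6 * e)) as [Hx'|Hx']].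
  - apply (ex_derive_n_ext_loc (fun _ => 0)); [|apply smooth_const].
    apply (locally_interval _ x m_infty (2 * e)); [exact I | simpl; lra |].
    intros y _ Hy. symmetry. apply right_half_zero. simpl in Hy. lra.
  - apply (ex_derive_n_ext_loc b); [|apply b_smooth; lra].
    apply (locally_interval _ x 0 (8 * e)); [simpl; lra | simpl; lra |].
    intros y Hy1 Hy2. symmetry. apply right_half_inner. simpl in *. lra.
  - apply (ex_derive_n_ext_loc (fun y => y)); [|apply smooth_id].
    apply (locally_interval _ x (4 * e) p_infty); [simpl; lra | exact I |].
    intros y Hy _. symmetry. apply right_half_id. simpl in Hy. lra.
Qed.

Lemma Derive_right_half_inner (u : R) :
  0 < u < 8 * e -> Derive (right_half e b) u = Derive b u.
Proof.
  intros Hu. apply Derive_ext_loc.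
  apply (locally_interval _ u 0 (8 * e)); [simpl; lra | simpl; lra |].
  intros y Hy1 Hy2. apply right_half_inner. simpl in *. lra.
Qed.

Lemma right_half_Derive_nonneg (u : R) : 0 <= Derive (right_half e b) u.
Proof.
  destruct (Rlt_le_dec u (2 * e)) as [Hu|Hu].
  - rewrite (Derive_const_on_halfline _ 0 (2 * e)); [lra | exact right_half_zero | exact Hu].
  - destruct (Rle_lt_dec u (4 * e)) as [Hu'|Hu'].
    + destruct (Req_dec u (2 * e)) as [->|Hne].
      (* [Derive b] is only known to be positive on (2e, 4e]: at 2e use
         continuity from the flat side. *)
      * right. symmetry. apply continuous_left_const.
        -- apply continuity_pt_filterlim, smooth_continuous_Derive, right_half_smooth.
        -- intros y Hy. apply (Derive_const_on_halfline _ 0 (2 * e));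
             [exact right_half_zero | exact Hy].
      * rewrite Derive_right_half_inner by lra. left. apply b_Derive_pos. lra.
    + rewrite (Derive_shift_on_halfline _ 0 (4 * e)); [lra | | exact Hu'].
      intros y Hy. rewrite Rplus_0_r. apply right_half_id. exact Hy.
Qed.

Lemma right_half_rising : exists m, 0 < m /\ rising_profile e m (right_half e b).
Proof.
  destruct (continuity_ab_min (Derive (right_half e b)) (9 * e / 4) (4 * e))
    as [x0 [Hmin Hx0]]; [lra | intros; apply smooth_continuous_Derive, right_half_smooth |].
  assert (Hpos : 0 < Derive (right_half e b) x0).
  { rewrite Derive_right_half_inner by lra. apply b_Derive_pos. lra. }
  exists (Rmin 1 (Derive (right_half e b) x0)). split; [apply Rmin_pos; lra|].
  split.
  - exact right_half_smooth.
  - exact right_half_zero.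
  - exact right_half_id.
  - exact right_half_Derive_nonneg.
  - intros u Hu. destruct (Rle_lt_dec u (4 * e)) as [Hu'|Hu'].
    + eapply Rle_trans; [apply Rmin_r | apply Hmin; lra].
    + rewrite (Derive_shift_on_halfline _ 0 (4 * e) u); [apply Rmin_l | | exact Hu'].
      intros y Hy. rewrite Rplus_0_r. apply right_half_id. exact Hy.
Qed.

End RightHalf.

Lemma right_half_mirror_rising (e : R) (b : R -> R) :
  0 < e ->
  (forall n x, -8 * e < x < 0 -> ex_derive_n b n x) ->
  (forall u, -2 * e <= u <= 0 -> b u = 0) ->
  (forall u, -8 * e <= u <= -4 * e -> b u = u) ->
  (forall u, -4 * e <= u < -2 * e -> 0 < Derive b u) ->
  exists m, 0 < m /\ rising_profile e m (right_half e (mirror b)).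
Proof.
  intros He Hsmooth Hzero Hid Hpos. apply right_half_rising; [exact He | | | |].
  - intros n x Hx. apply ex_derive_n_opp, ex_derive_n_comp_opp.
    apply (locally_interval _ (- x) (-8 * e) 0); [simpl; lra | simpl; lra |].
    intros y Hy1 Hy2 k _. apply Hsmooth. simpl in *. lra.
  - intros u Hu. unfold mirror. rewrite Hzero by lra. apply Ropp_0.
  - intros u Hu. unfold mirror. rewrite Hid by lra. apply Ropp_involutive.
  - intros u Hu. rewrite Derive_mirror.
    + apply Hpos. lra.
    + apply (Hsmooth 1%nat). lra.
Qed.

Lemma rising_profile_weaken (e m m' : R) (G : R -> R) :
  m' <= m -> rising_profile e m G -> rising_profile e m' G.
Proof.
  intros Hm [Hs Hz Hid Hnn Hge]. split; auto.
  intros u Hu. apply (Rle_trans _ m); auto.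
Qed.

Section RisingProfile.

Variables (e m : R) (G : R -> R).
Hypothesis He : 0 < e.
Hypothesis HG : rising_profile e m G.

Lemma Derive_rising_right (u : R) : 4 * e < u -> Derive G u = 1.
Proof.
  apply (Derive_shift_on_halfline _ 0 (4 * e)).
  intros y Hy. rewrite Rplus_0_r. apply (rising_id HG). exact Hy.
Qed.

Lemma rising_Derive_bounded : exists M, 1 <= M /\ forall u, Derive G u <= M.
Proof.
  destruct (continuity_ab_maj (Derive G) (2 * e) (4 * e)) as [x1 [Hmax _]];
    [lra | intros; apply smooth_continuous_Derive, (rising_smooth HG) |].
  exists (Rmax 1 (Derive G x1)). split; [apply Rmax_l|]. intros u.
  destruct (Rlt_le_dec u (2 * e)) as [Hu|Hu];
    [|destruct (Rle_lt_dec u (4 * e)) as [Hu'|Hu']].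
  - rewrite (Derive_const_on_halfline _ 0 (2 * e) u); [| exact (rising_zero HG) | exact Hu].
    eapply Rle_trans; [|apply Rmax_l]. lra.
  - eapply Rle_trans; [apply Hmax; lra | apply Rmax_r].
  - rewrite Derive_rising_right by exact Hu'. apply Rmax_l.
Qed.

End RisingProfile.

Set Implicit Arguments.
Record smooth_ramp (w M : R) (rho : R -> R) : Prop := {
  sramp_smooth : smooth rho;
  sramp_left : forall x, x <= 0 -> rho x = 0;
  sramp_right : forall x, w <= x -> rho x = x + w;
  sramp_Derive_nonneg : forall x, 0 <= Derive rho x;
  sramp_Derive_le : forall x, Derive rho x <= M }.
Unset Implicit Arguments.

Definition ramp (e : R) (G : R -> R) (x : R) : R := / 16 * G (16 * x + 2 * e).

Lemma ramp_smooth_ramp (e m M : R) (G : R -> R) :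
  rising_profile e m G -> (forall u, Derive G u <= M) -> smooth_ramp (e / 8) M (ramp e G).
Proof.
  intros HG HM.
  assert (HD : forall x, Derive (ramp e G) x = Derive G (16 * x + 2 * e)).
  { intros x. apply is_derive_unique. unfold ramp. auto_derive.
    - apply smooth_ex_derive, (rising_smooth HG).
    - change (fun y => G y) with G. field. }
  split.
  - apply smooth_scal.
    apply (smooth_comp_scal (fun y => G (y + 2 * e))), smooth_comp_trans, (rising_smooth HG).
  - intros x Hx. unfold ramp. rewrite (rising_zero HG) by lra. ring.
  - intros x Hx. unfold ramp. rewrite (rising_id HG) by lra. field.
  - intros x. rewrite HD. apply (rising_Derive_nonneg HG).
  - intros x. rewrite HD. apply HM.
Qed.

Section Sawtooth.

Variables (rho : R -> R) (w D M : R).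
Hypothesis Hw : 0 < w.
Hypothesis HwD : w <= D.
Hypothesis Hrho : smooth_ramp w M rho.
Let rho_smooth := sramp_smooth Hrho.
Let rho_left := sramp_left Hrho.
Let rho_right := sramp_right Hrho.
Let rho_Derive_nonneg := sramp_Derive_nonneg Hrho.
Let rho_Derive_le := sramp_Derive_le Hrho.

Definition sawtooth (x : R) : R := rho x - rho (x - D) - D / w * (rho x - rho (x - w)).

Lemma sawtooth_smooth : smooth sawtooth.
Proof.
  pose proof (smooth_comp_trans rho (- D) rho_smooth) as Hshift_D.
  pose proof (smooth_comp_trans rho (- w) rho_smooth) as Hshift_w.
  apply smooth_minus; [apply smooth_minus | apply smooth_scal, smooth_minus]; assumption.
Qed.

Lemma sawtooth_left (x : R) : x <= 0 -> sawtooth x = 0.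
Proof. intros Hx. unfold sawtooth. rewrite !rho_left by lra. ring. Qed.

Lemma sawtooth_right (x : R) : D + w <= x -> sawtooth x = 0.
Proof.
  intros Hx. unfold sawtooth. rewrite !rho_right by lra. field. lra.
Qed.

Lemma ramp_increment_bounds (s x : R) : 0 <= s -> 0 <= rho x - rho (x - s) <= s + 2 * w.
Proof.
  intros Hs.
  assert (Hmono : forall y z, y <= z -> rho y <= rho z)
    by (intros y z; apply smooth_nondecreasing; [exact rho_smooth | exact rho_Derive_nonneg]).
  assert (Hnonneg : forall y, 0 <= rho y).
  { intros y. destruct (Rle_lt_dec y 0); [rewrite rho_left; lra|].
    rewrite <- (rho_left 0) by lra. apply Hmono. lra. }
  split; [pose proof (Hmono (x - s) x); lra|].
  destruct (Rle_lt_dec (s + w) x) as [Hx|Hx].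
  - rewrite !rho_right by lra. lra.
  - pose proof (Hmono x (s + w)). rewrite (rho_right (s + w)) in * by lra.
    pose proof (Hnonneg (x - s)). lra.
Qed.

Lemma Rabs_sawtooth_le (x : R) : Rabs (sawtooth x) <= 3 * D.
Proof.
  destruct (ramp_increment_bounds D x) as [HD1 HD2]; [lra|].
  destruct (ramp_increment_bounds w x) as [Hw1 Hw2]; [lra|].
  assert (Hstep : 0 <= D / w * (rho x - rho (x - w)) <= 3 * D).
  { split; [apply Rmult_le_pos; [apply Rdiv_le_0_compat|]; lra|].
    apply (Rle_trans _ (D / w * (3 * w))).
    - apply Rmult_le_compat_l; [apply Rdiv_le_0_compat|]; lra.
    - right. field. lra. }
  unfold sawtooth. apply Rabs_le. lra.
Qed.

Lemma Derive_sawtooth (x : R) :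
  Derive sawtooth x =
  Derive rho x - Derive rho (x - D) - D / w * (Derive rho x - Derive rho (x - w)).
Proof.
  apply is_derive_unique. unfold sawtooth. auto_derive.
  - repeat split; apply smooth_ex_derive, rho_smooth.
  - change (fun y => rho y) with rho. unfold Rminus. ring.
Qed.

Lemma Derive_sawtooth_mid (x : R) : 2 * w < x < D -> Derive sawtooth x = 1.
Proof.
  intros Hx. rewrite Derive_sawtooth.
  rewrite (Derive_shift_on_halfline rho w w x), (Derive_shift_on_halfline rho w w (x - w)),
    (Derive_const_on_halfline rho 0 0 (x - D));
    first [ring | exact rho_left | exact rho_right | lra].
Qed.

Lemma Derive_sawtooth_ge (x : R) : - (M * (1 + D / w)) <= Derive sawtooth x.
Proof.
  rewrite Derive_sawtooth.
  assert (0 <= D / w) by (apply Rdiv_le_0_compat; lra).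
  pose proof (rho_Derive_nonneg x). pose proof (rho_Derive_le (x - D)).
  pose proof (rho_Derive_nonneg (x - w)). pose proof (rho_Derive_le x).
  assert (D / w * (Derive rho x - Derive rho (x - w)) <= D / w * M)
    by (apply Rmult_le_compat_l; lra).
  replace (- (M * (1 + D / w))) with (- M - D / w * M) by ring.
  lra.
Qed.

End Sawtooth.

Definition interpolation_threshold (e m M : R) : R := Rmax 1 (Rmax e (110 * M / (e * m))).

Lemma interpolation_threshold_bounds (e m M L : R) :
  0 < e -> 0 < m -> interpolation_threshold e m M <= L ->
  1 <= L /\ e <= L /\ 110 * M <= e * m * L.
Proof.
  intros He Hm HL. unfold interpolation_threshold in HL.
  pose proof (Rmax_l 1 (Rmax e (110 * M / (e * m)))).
  pose proof (Rmax_r 1 (Rmax e (110 * M / (e * m)))).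
  pose proof (Rmax_l e (110 * M / (e * m))). pose proof (Rmax_r e (110 * M / (e * m))).
  repeat split; try lra.
  assert (Hem : 0 < e * m) by nra.
  apply (Rmult_le_reg_r (/ (e * m))); [apply Rinv_0_lt_compat; lra|].
  replace (e * m * L * / (e * m)) with L by (field; lra). lra.
Qed.

Lemma interpolation_slope_budget (e m M kappa L : R) :
  0 < e -> 0 < m -> 1 <= M -> 1 <= kappa -> interpolation_threshold e m M <= L ->
  / (kappa * L ^ 2) * (M * (1 + (2 * L + 19 * e / 4) / (e / 8))) <= m / 2.
Proof.
  intros He Hm HM Hkappa HL.
  destruct (interpolation_threshold_bounds e m M L He Hm HL) as [HL1 [HLe HLM]].
  replace (/ (kappa * L ^ 2) * (M * (1 + (2 * L + 19 * e / 4) / (e / 8))))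
    with (M * (16 * L + 39 * e) / (e * kappa * L ^ 2)) by (field; lra).
  apply Rle_div_l; [apply Rmult_lt_0_compat; [nra | apply pow_lt; lra]|].
  assert (M * (16 * L + 39 * e) <= 55 * M * L) by nra.
  assert (55 * M * L <= m / 2 * (e * L) * L) by nra.
  assert (m / 2 * (e * L) * L <= m / 2 * (e * kappa * L ^ 2)).
  { replace (m / 2 * (e * kappa * L ^ 2)) with (m / 2 * (e * L) * L * kappa) by ring.
    assert (0 <= m / 2 * (e * L) * L) by (apply Rmult_le_pos; nra).
    nra. }
  lra.
Qed.

Section Interpolation.

Variables (e m M kappa L : R) (Gl Gr : R -> R).
Hypothesis He : 0 < e.
Hypothesis Hm : 0 < m.
Hypothesis HM : 1 <= M.
Hypothesis Hkappa : 1 <= kappa.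
Hypothesis HGl : rising_profile e m Gl.
Hypothesis HGr : rising_profile e m Gr.
Hypothesis HGr_Derive_le : forall u, Derive Gr u <= M.
Hypothesis HL : interpolation_threshold e m M <= L.

Definition glued (t : R) : R := mirror Gl (t + L) + Gr (t - L).

Let c := / (kappa * L ^ 2).
Let a := - L - 5 * e / 2.
Let D := 2 * L + 19 * e / 4.
Let tooth := sawtooth (ramp e Gr) (e / 8) D.

Definition interpolant (t : R) : R := glued t + c * tooth (t - a).

Let L_bounds := interpolation_threshold_bounds e m M L He Hm HL.
Let ramp_Gr := ramp_smooth_ramp e m M Gr HGr HGr_Derive_le.

Let c_pos : 0 < c.
Proof.
  destruct L_bounds as [HL1 _]. apply Rinv_0_lt_compat, Rmult_lt_0_compat; [lra|].
  apply pow_lt. lra.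
Qed.

Lemma interpolant_smooth : smooth interpolant.
Proof.
  pose proof (smooth_comp_trans _ L (smooth_mirror _ (rising_smooth HGl))) as Hl.
  pose proof (smooth_comp_trans _ (- L) (rising_smooth HGr)) as Hr.
  pose proof (smooth_comp_trans _ (- a) (sawtooth_smooth _ _ D _ ramp_Gr)) as Ht.
  apply smooth_plus; [apply smooth_plus | apply smooth_scal].
  - exact Hl.
  - exact Hr.
  - exact Ht.
Qed.

Lemma interpolant_eq_glued_left (t : R) : t <= - L - 5 * e / 2 -> interpolant t = glued t.
Proof.
  intros Ht. destruct L_bounds as [HL1 _]. unfold interpolant, tooth.
  rewrite (sawtooth_left _ _ D M), Rmult_0_r, Rplus_0_r; unfold a, D in *; auto; lra.
Qed.

Lemma interpolant_eq_glued_right (t : R) : L + 19 * e / 8 <= t -> interpolant t = glued t.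
Proof.
  intros Ht. destruct L_bounds as [HL1 _]. unfold interpolant, tooth.
  rewrite (sawtooth_right _ _ D M), Rmult_0_r, Rplus_0_r; unfold a, D in *; auto; lra.
Qed.

Lemma Derive_interpolant (t : R) :
  Derive interpolant t = Derive Gl (- (t + L)) + Derive Gr (t - L) + c * Derive tooth (t - a).
Proof.
  apply is_derive_unique. unfold interpolant, glued, mirror. auto_derive.
  - repeat split.
    + apply smooth_ex_derive, (rising_smooth HGl).
    + apply smooth_ex_derive, (rising_smooth HGr).
    + apply smooth_ex_derive, (sawtooth_smooth _ _ _ _ ramp_Gr).
  - change (fun y => Gl y) with Gl. change (fun y => Gr y) with Gr.
    change (fun y => tooth y) with tooth.
    unfold Rminus. ring.
Qed.

Lemma Derive_interpolant_ge (t : R) : 1 / 2 * / kappa * / L ^ 2 <= Derive interpolant t.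
Proof.
  destruct L_bounds as [HL1 _]. pose proof c_pos as Hc.
  assert (Hbudget : c * (M * (1 + D / (e / 8))) <= m / 2)
    by exact (interpolation_slope_budget e m M kappa L He Hm HM Hkappa HL).
  assert (Hc_le_m : c <= m).
  { assert (1 <= M * (1 + D / (e / 8))).
    { assert (0 <= D / (e / 8)) by (unfold D; apply Rdiv_le_0_compat; lra). nra. }
    nra. }
  assert (Hloss : - (m / 2) <= c * Derive tooth (t - a)).
  { assert (Htooth : - (M * (1 + D / (e / 8))) <= Derive tooth (t - a))
      by exact (Derive_sawtooth_ge _ (e / 8) D M ltac:(lra) ltac:(unfold D; lra) ramp_Gr (t - a)).
    apply (Rmult_le_compat_l c) in Htooth; lra. }
  replace (1 / 2 * / kappa * / L ^ 2) with (c / 2) by (unfold c; field; lra).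
  rewrite Derive_interpolant.
  pose proof (rising_Derive_nonneg HGl (- (t + L))).
  pose proof (rising_Derive_nonneg HGr (t - L)).
  destruct (Rle_lt_dec t (- L - 9 * e / 4)) as [Ht|Ht];
    [|destruct (Rlt_le_dec t (L + 9 * e / 4)) as [Ht'|Ht']].
  - assert (m <= Derive Gl (- (t + L))) by (apply (rising_Derive_ge HGl); lra). lra.
  - assert (Hmid : Derive tooth (t - a) = 1)
      by (apply (Derive_sawtooth_mid _ _ D M); unfold a, D; auto; lra).
    rewrite Hmid. lra.
  - assert (m <= Derive Gr (t - L)) by (apply (rising_Derive_ge HGr); lra). lra.
Qed.

Lemma Derive_interpolant_pos (t : R) : 0 < Derive interpolant t.
Proof.
  eapply Rlt_le_trans; [|apply Derive_interpolant_ge].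
  replace (1 / 2 * / kappa * / L ^ 2) with (c / 2) by (unfold c; field; lra).
  pose proof c_pos. lra.
Qed.

Lemma interpolant_range (t : R) :
  - L - 8 * e <= t <= L + 8 * e -> -8 * e <= interpolant t <= 8 * e.
Proof.
  intros Ht. destruct L_bounds as [HL1 _].
  assert (Hmono : forall x y, x <= y -> interpolant x <= interpolant y).
  { intros x y. apply smooth_nondecreasing; [exact interpolant_smooth|].
    intros z. left. apply Derive_interpolant_pos. }
  assert (Hleft : interpolant (- L - 8 * e) = -8 * e).
  { rewrite interpolant_eq_glued_left by lra. unfold glued, mirror.
    rewrite (rising_id HGl) by lra. rewrite (rising_zero HGr) by lra. ring. }
  assert (Hright : interpolant (L + 8 * e) = 8 * e).
  { rewrite interpolant_eq_glued_right by lra. unfold glued, mirror.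
    rewrite (rising_zero HGl) by lra. rewrite (rising_id HGr) by lra. ring. }
  split; [rewrite <- Hleft | rewrite <- Hright]; apply Hmono; lra.
Qed.

Lemma Rabs_interpolant_sub_glued (t : R) : Rabs (interpolant t - glued t) <= 100 / (kappa * L).
Proof.
  destruct L_bounds as [HL1 [HLe _]]. pose proof c_pos as Hc.
  replace (interpolant t - glued t) with (c * tooth (t - a)) by (unfold interpolant; ring).
  replace (100 / (kappa * L)) with (c * (100 * L)) by (unfold c; field; lra).
  rewrite Rabs_mult, (Rabs_right c) by lra.
  apply Rmult_le_compat_l; [lra|].
  eapply Rle_trans; [apply (Rabs_sawtooth_le _ _ D M); unfold D; auto; lra|].
  unfold D. lra.
Qed.

End Interpolation.

Lemma beta_L_eq_glued (e L : R) (bs : R -> R) (t : R) :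
  0 <= L -> bs 0 = 0 -> - L - 8 * e <= t <= L + 8 * e ->
  beta_L bs L t = glued L (right_half e (mirror bs)) (right_half e bs) t.
Proof.
  intros HL Hbs0 Ht. unfold beta_L, glued, mirror, right_half.
  repeat destruct Rle_dec; try lra; rewrite ?Ropp_involutive; try ring.
  replace (t + L) with 0 by lra. rewrite Hbs0. ring.
Qed.

Lemma beta_star_profiles (e : R) (bs : R -> R) :
  0 < e ->
  smooth_on (-8 * e) (8 * e) bs ->
  (forall t, (-8 * e <= t <= -4 * e \/ 4 * e <= t <= 8 * e) -> bs t = t) ->
  (forall t, -2 * e <= t <= 2 * e -> bs t = 0) ->
  (forall t, (-4 * e <= t < -2 * e \/ 2 * e < t <= 4 * e) -> Derive bs t > 0) ->
  exists m M, 0 < m /\ 1 <= M /\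
    rising_profile e m (right_half e (mirror bs)) /\ rising_profile e m (right_half e bs) /\
    forall u, Derive (right_half e bs) u <= M.
Proof.
  intros He Hsmooth Hid Hzero Hpos.
  assert (Hbs : forall n x, -8 * e < x < 8 * e -> ex_derive_n bs n x)
    by (intros n x; apply smooth_on_ex_derive_n, Hsmooth).
  destruct (right_half_mirror_rising e bs He) as [ml [Hml HGl]];
    [intros; apply Hbs; lra | intros; apply Hzero; lra | intros; apply Hid; lra
    | intros; apply Hpos; lra |].
  destruct (right_half_rising e bs He) as [mr [Hmr HGr]];
    [intros; apply Hbs; lra | intros; apply Hzero; lra | intros; apply Hid; lra
    | intros; apply Hpos; lra |].
  destruct (rising_Derive_bounded e mr _ He HGr) as [M [HM1 HM]].
  exists (Rmin ml mr), M. split; [|split; [|split; [|split]]].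
  - apply Rmin_pos; assumption.
  - exact HM1.
  - apply (rising_profile_weaken _ ml); [apply Rmin_l | exact HGl].
  - apply (rising_profile_weaken _ mr); [apply Rmin_r | exact HGr].
  - exact HM.
Qed.

Theorem mainTheorem8 :
  forall (eps0 kappa : R) (bs : R -> R),
    0 < eps0 ->
    smooth_on (-8 * eps0) (8 * eps0) bs ->
    (forall t, (-8 * eps0 <= t <= -4 * eps0 \/ 4 * eps0 <= t <= 8 * eps0) -> bs t = t) ->
    (forall t, -2 * eps0 <= t <= 2 * eps0 -> bs t = 0) ->
    (forall t, (-4 * eps0 <= t < -2 * eps0 \/ 2 * eps0 < t <= 4 * eps0) -> Derive bs t > 0) ->
    (forall t, -4 * eps0 < t < -2 * eps0 -> Derive_n bs 2 t < 0) ->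
    (forall t, 2 * eps0 < t < 4 * eps0 -> Derive_n bs 2 t > 0) ->
    1 <= kappa ->
    exists L0 : R, 1 <= L0 /\
      forall L : R, L0 <= L ->
        exists (h : R -> R) (d : R), 0 < d /\
          smooth_open h (- L - 8 * eps0) (L + 8 * eps0) d /\
          (forall t, - L - 8 * eps0 <= t <= L + 8 * eps0 ->
             -8 * eps0 <= h t <= 8 * eps0) /\
          (forall t, - L - 8 * eps0 <= t <= L + 8 * eps0 -> Derive h t > 0) /\
          (exists eta : R, 0 < eta /\
             (forall t, - L - 8 * eps0 <= t <= - L - 11 * eps0 / 4 + eta ->
                h t = beta_L bs L t) /\
             (forall t, L + 11 * eps0 / 4 - eta <= t <= L + 8 * eps0 ->
                h t = beta_L bs L t)) /\
          (forall t, - L - 8 * eps0 <= t <= L + 8 * eps0 ->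
             Rabs (h t - beta_L bs L t) <= 100 / (kappa * L)) /\
          (forall t, - L - 8 * eps0 <= t <= L + 8 * eps0 ->
             Derive h t >= 1 / 2 * / kappa * / (L ^ 2)).
Proof.
  intros e kappa bs He Hsmooth Hid Hzero Hpos _ _ Hkappa.
  destruct (beta_star_profiles e bs He Hsmooth Hid Hzero Hpos)
    as [m [M [Hm [HM [HGl [HGr HGrM]]]]]].
  exists (interpolation_threshold e m M). split; [apply Rmax_l|]. intros L HL.
  destruct (interpolation_threshold_bounds e m M L He Hm HL) as [HL1 _].
  assert (Hbeta : forall t, - L - 8 * e <= t <= L + 8 * e ->
            beta_L bs L t = glued L (right_half e (mirror bs)) (right_half e bs) t)
    by (intros t Ht; apply beta_L_eq_glued; [lra | apply Hzero; lra | exact Ht]).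
  set (Gl := right_half e (mirror bs)). set (Gr := right_half e bs).
  exists (interpolant e kappa L Gl Gr), 1.
  split; [lra|]. split; [|split; [|split; [|split; [|split]]]].
  - intros n x _. apply (interpolant_smooth e m M); assumption.
  - intros t Ht. apply (interpolant_range e m M); assumption.
  - intros t _. apply Rlt_gt, (Derive_interpolant_pos e m M); assumption.
  - exists (e / 8). split; [lra|]. split; intros t Ht; rewrite Hbeta by lra.
    + apply (interpolant_eq_glued_left e m M); try assumption. lra.
    + apply (interpolant_eq_glued_right e m M); try assumption. lra.
  - intros t Ht. rewrite Hbeta by exact Ht. apply (Rabs_interpolant_sub_glued e m M); assumption.
  - intros t _. apply Rle_ge, (Derive_interpolant_ge e m M); assumption.
Qed.
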